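(* Let $n\ge1$, $\preceq$ an admissible order on $L([0,1])$, $F\colon L([0,1])^2\to L([0,1])$, $G\colon L([0,1])^n\to L([0,1])$. The IV Sugeno-like $FG$-functional $\mathbf S_m^{F,G}$ is non-decreasing (in each argument, w.r.t. $\preceq$) for every IV fuzzy measure $m$ whenever: (i) $F(\cdot,\mathbf1)$ is non-decreasing, $G=f\circ\mathrm{Proj}_1$ for some non-decreasing $f\colon L([0,1])\to L([0,1])$; or (ii) $F$ is non-decreasing (in each variable), $G=f\circ\vee$ for some non-decreasing $f\colon L([0,1])\to L([0,1])$.
   Context: $N=\{1,\dots,n\}$. $L([0,1])=\{[a,b]:0\le a\le b\le1\}$, $\mathbf0=[0,0]$, $\mathbf1=[1,1]$. An admissible order $\preceq$ is a total order on $L([0,1])$ with $[a,b]\preceq[c,d]$ whenever $a\le c$, $b\le d$. $\vee$ denotes maximum w.r.t. $\preceq$; all monotonicity is w.r.t. $\preceq$; $\mathrm{Proj}_1(X_1,\dots,X_n)=X_1$. An IV fuzzy measure w.r.t. $\preceq$ is $m\colon2^N\to L([0,1])$, $m(\emptyset)=\mathbf0$, $m(N)=\mathbf1$, $m(A)\preceq m(B)$ for $A\subseteq B$. For a permutation $\sigma$, $E_{\sigma(i)}=\{\sigma(i),\dots,\sigma(n)\}$. $\mathbf S_m^{F,G}(X_1,\dots,X_n)=G\big(F(X_{\sigma(1)},m(E_{\sigma(1)})),\dots,F(X_{\sigma(n)},m(E_{\sigma(n)}))\big)$ with $\sigma$ any permutation such that $X_{\sigma(1)}\preceq\dots\preceq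 X_{\sigma(n)}$; it is defined when this value does not depend on the choice of $\sigma$ for all inputs. *)

From HB Require Import structures.
From mathcomp Require Import all_boot all_order all_algebra.
From mathcomp Require Import fingroup perm.
From mathcomp Require Import reals.
Set Implicit Arguments. Unset Strict Implicit. Unset Printing Implicit Defensive.
Import Order.TTheory GRing.Theory Num.Theory.
Local Open Scope ring_scope.

Record ivl (R : realType) := Ivl {
  lo : R; hi : R;
  ivlP : (0 <= lo) && (lo <= hi) && (hi <= 1) }.

Lemma ivl0P (R : realType) : (0 <= (0:R)) && (0 <= (0:R)) && ((0:R) <= 1).
Proof. by rewrite lexx ler01. Qed.
Lemma ivl1P (R : realType) : (0 <= (1:R)) && (1 <= (1:R)) && ((1:R) <= 1).
Proof. by rewrite lexx ler01. Qed.
Definition ivl0 (R : realType) : ivl R := @Ivl R 0 0 (ivl0P R).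
Definition ivl1 (R : realType) : ivl R := @Ivl R 1 1 (ivl1P R).

Definition admissible (R : realType) (le : ivl R -> ivl R -> Prop) : Prop :=
  [/\ (forall x, le x x),
      (forall x y, le x y -> le y x -> x = y),
      (forall x y z, le x y -> le y z -> le x z),
      (forall x y, le x y \/ le y x) &
      (forall x y, lo x <= lo y -> hi x <= hi y -> le x y)].

Definition nondecr (R : realType) (le : ivl R -> ivl R -> Prop)
  (f : ivl R -> ivl R) : Prop := forall x y, le x y -> le (f x) (f y).

Definition iv_fuzzy_measure (R : realType) (le : ivl R -> ivl R -> Prop) (n : nat)
  (m : {set 'I_n} -> ivl R) : Prop :=
  [/\ m set0 = ivl0 R, m setT = ivl1 R &
      (forall A B : {set 'I_n}, A \subset B -> le (m A) (m B))].

Definition sorting (R : realType) (le : ivl R -> ivl R -> Prop) (n : nat)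
  (s : {perm 'I_n}) (X : 'I_n -> ivl R) : Prop :=
  forall i j : 'I_n, (i <= j)%N -> le (X (s i)) (X (s j)).

Definition Eset (n : nat) (s : {perm 'I_n}) (i : 'I_n) : {set 'I_n} :=
  [set s j | j : 'I_n & (i <= j)%N].

Definition Sval (R : realType) (n : nat) (F : ivl R -> ivl R -> ivl R)
  (G : ('I_n -> ivl R) -> ivl R) (m : {set 'I_n} -> ivl R)
  (s : {perm 'I_n}) (X : 'I_n -> ivl R) : ivl R :=
  G (fun i => F (X (s i)) (m (Eset s i))).

(* S_m^{F,G} is non-decreasing: for X <= Y componentwise, and any admissible
   (sorting) permutations s of X and t of Y, the values compare. *)
Definition S_nondecr (R : realType) (le : ivl R -> ivl R -> Prop) (n : nat)
  (F : ivl R -> ivl R -> ivl R) (G : ('I_n -> ivl R) -> ivl R)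
  (m : {set 'I_n} -> ivl R) : Prop :=
  forall (X Y : 'I_n -> ivl R) (s t : {perm 'I_n}),
    (forall i, le (X i) (Y i)) -> sorting le s X -> sorting le t Y ->
    le (Sval F G m s X) (Sval F G m t Y).

From mathcomp Require Import all_boot all_order all_algebra.
From mathcomp Require Import fingroup perm.
From mathcomp Require Import reals.
Set Implicit Arguments. Unset Strict Implicit. Unset Printing Implicit Defensive.

(* In case (i) the set E_{sigma(1)} is all of N, so the functional equals
   f (F (min X, 1)), and min X <= X_{tau(1)} <= Y_{tau(1)} = min Y.
   In case (ii) let F (X_{sigma(j)}, m A), with A = E_{sigma(j)}, be the
   largest term for X, and let k be the first position with tau(k) in A.
   Sortedness gives X_{sigma(j)} <= X_{tau(k)} <= Y_{tau(k)}, and minimality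
   of k gives A \subset E_{tau(k)}, so that term is dominated by the k-th
   term for Y, hence by the largest one. *)

Section TotalPreorderMax.

Variables (U : Type) (le : U -> U -> Prop).
Hypotheses (le_refl : forall x, le x x)
  (le_trans : forall x y z, le x y -> le y z -> le x z)
  (le_total : forall x y, le x y \/ le y x).

Lemma seq_max (I : eqType) (Y : I -> U) (x0 : I) (s : seq I) :
  exists j, forall i, i \in x0 :: s -> le (Y i) (Y j).
Proof.
elim: s => [|a s [j Yj]]; first by exists x0 => i; rewrite inE => /eqP ->.
case: (le_total (Y a) (Y j)) => [Yaj | Yja].
  by exists j => i; rewrite in_cons orbCA -in_cons => /predU1P[-> | /Yj].
exists a => i; rewrite in_cons orbCA -in_cons => /predU1P[-> // | /Yj Yij].
exact: le_trans Yij Yja.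
Qed.

Lemma fintype_max (T : finType) (x0 : T) (Y : T -> U) :
  exists j, forall i, le (Y i) (Y j).
Proof.
have [j Yj] := seq_max Y x0 (enum T).
by exists j => i; apply: Yj; rewrite in_cons mem_enum orbT.
Qed.

End TotalPreorderMax.

Lemma mem_Eset n (s : {perm 'I_n}) (i x : 'I_n) :
  (x \in Eset s i) = (i <= (s^-1)%g x)%N.
Proof.
apply/imsetP/idP => [[j]|ix]; first by rewrite inE => ij ->; rewrite permK.
by exists ((s^-1)%g x); rewrite ?inE ?permKV.
Qed.

Lemma Eset_ord0 n (s : {perm 'I_n.+1}) : Eset s ord0 = setT.
Proof. by apply/setP => x; rewrite mem_Eset inE. Qed.

Lemma Eset_first_hit n (t : {perm 'I_n}) (A : {set 'I_n}) (x : 'I_n) :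
  x \in A -> exists2 k, t k \in A & A \subset Eset t k.
Proof.
move=> xA; have tx_mem : t ((t^-1)%g x) \in A by rewrite permKV.
case: (@arg_minnP _ _ (fun k => t k \in A) (@nat_of_ord _) tx_mem).
move=> k tkA k_min; exists k => //.
by apply/subsetP => y yA; rewrite mem_Eset k_min ?permKV.
Qed.

Section SugenoLike.

Variables (R : realType) (le : ivl R -> ivl R -> Prop).
Hypotheses (le_refl : forall x, le x x)
  (le_trans : forall x y z, le x y -> le y z -> le x z)
  (le_total : forall x y, le x y \/ le y x).

Lemma sorting_Eset n (s : {perm 'I_n}) (X : 'I_n -> ivl R) (i x : 'I_n) :
  sorting le s X -> x \in Eset s i -> le (X (s i)) (X x).
Proof. by rewrite mem_Eset => sX /sX; rewrite permKV. Qed.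

Lemma sorting_first n (s : {perm 'I_n.+1}) (X : 'I_n.+1 -> ivl R) x :
  sorting le s X -> le (X (s ord0)) (X x).
Proof. by move/sorting_Eset; apply; rewrite Eset_ord0 inE. Qed.

Lemma Sugeno_term_dominated n (F : ivl R -> ivl R -> ivl R)
    (m : {set 'I_n} -> ivl R) (X Y : 'I_n -> ivl R) (s t : {perm 'I_n})
    (j : 'I_n) :
  (forall y, nondecr le (F^~ y)) -> (forall x, nondecr le (F x)) ->
  (forall A B : {set 'I_n}, A \subset B -> le (m A) (m B)) ->
  (forall i, le (X i) (Y i)) -> sorting le s X ->
  exists k, le (F (X (s j)) (m (Eset s j))) (F (Y (t k)) (m (Eset t k))).
Proof.
move=> F_mon1 F_mon2 m_mon XY sX.
have sj_mem : s j \in Eset s j by rewrite mem_Eset permK.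
have [k tk_mem sub] := Eset_first_hit t sj_mem; exists k.
apply: (le_trans (y := F (Y (t k)) (m (Eset s j)))).
  apply/F_mon1/(le_trans (y := X (t k))); last exact: XY.
  exact: sorting_Eset sX tk_mem.
exact/F_mon2/m_mon.
Qed.

Lemma S_nondecr_proj1 n (F : ivl R -> ivl R -> ivl R)
    (G : ('I_n.+1 -> ivl R) -> ivl R) (m : {set 'I_n.+1} -> ivl R) f :
  nondecr le (F^~ (ivl1 R)) -> nondecr le f -> (forall Y, G Y = f (Y ord0)) ->
  m setT = ivl1 R -> S_nondecr le F G m.
Proof.
move=> F_mon f_mon G_proj mT X Y s t XY sX _.
rewrite /Sval !G_proj !Eset_ord0 mT; apply/f_mon/F_mon.
exact: le_trans (sorting_first _ sX) (XY _).
Qed.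

Lemma S_nondecr_max n (F : ivl R -> ivl R -> ivl R)
    (G : ('I_n.+1 -> ivl R) -> ivl R) (m : {set 'I_n.+1} -> ivl R) f :
  (forall y, nondecr le (F^~ y)) -> (forall x, nondecr le (F x)) ->
  nondecr le f ->
  (forall Y j, (forall i, le (Y i) (Y j)) -> G Y = f (Y j)) ->
  (forall A B : {set 'I_n.+1}, A \subset B -> le (m A) (m B)) ->
  S_nondecr le F G m.
Proof.
move=> F_mon1 F_mon2 f_mon G_max m_mon X Y s t XY sX _; rewrite /Sval.
set V := fun i => _; set W := fun i => _.
have [j Vj] := fintype_max le_refl le_trans le_total ord0 V.
have [k Wk] := fintype_max le_refl le_trans le_total ord0 W.
rewrite (G_max _ _ Vj) (G_max _ _ Wk); apply: f_mon.
have [k' Vj_Wk'] := Sugeno_term_dominated t j F_mon1 F_mon2 m_mon XY sX.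
exact: le_trans Vj_Wk' (Wk k').
Qed.

End SugenoLike.

Theorem proposition11 (R : realType) (n : nat) (le : ivl R -> ivl R -> Prop)
  (F : ivl R -> ivl R -> ivl R) (G : ('I_n.+1 -> ivl R) -> ivl R) :
  admissible le ->
  ((nondecr le (fun x => F x (ivl1 R)) /\
    exists f, nondecr le f /\ forall Y, G Y = f (Y ord0))
   \/
   ((forall y, nondecr le (fun x => F x y)) /\ (forall x, nondecr le (F x)) /\
    exists f, nondecr le f /\
      forall (Y : 'I_n.+1 -> ivl R) (j : 'I_n.+1),
        (forall i, le (Y i) (Y j)) -> G Y = f (Y j))) ->
  forall m : {set 'I_n.+1} -> ivl R, iv_fuzzy_measure le m -> S_nondecr le F G m.
Proof.
case=> le_refl _ le_trans le_total _.
move=> [[F_mon [f [f_mon G_proj]]] | [F_mon1 [F_mon2 [f [f_mon G_max]]]]] m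
  [_ mT m_mon].
- exact: (S_nondecr_proj1 le_trans F_mon f_mon G_proj mT).
- exact: (S_nondecr_max le_refl le_trans le_total
    F_mon1 F_mon2 f_mon G_max m_mon).
Qed.
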